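(* Let $\widehat q\in L_2(0,\pi)$ be real valued and such that $0$ is an eigenvalue of the problem $-y''+\widehat q(x)y=\lambda y$, $y(0)=y'(\pi)=0$. Let $\widehat S(\rho,x)$ be the solution of $-y''+\widehat qy=\rho^2y$ with $\widehat S(\rho,0)=0$, $\widehat S'(\rho,0)=1$, let $\widehat s_0(x)=3(\widehat S(0,x)/x-1)$ and $\widehat\sigma_0(x)=\widehat s_0(x)/x+\widehat s_0'(x)-\frac32\int_0^x\widehat q(t)\,dt$ (the first NSBF coefficients of $\widehat S$ and $\widehat S'$), and let $\widehat\omega=\frac12\int_0^\pi\widehat q(t)\,dt$. Then $$\widehat\omega=-\frac{\widehat\sigma_0(\pi)}{3}-\frac1\pi.$$ Consequently, for every eigenvalue $\widehat\rho_k^2$ ($\widehat\rho_k>0$) of this problem, the NSBF coefficients $\widehat\sigma_n(\pi)$ of $\widehat S'(\rho,\pi)$ satisfy $$\left(\mathbf j_1(\widehat\rho_k\pi)-\frac{\sin(\widehat\rho_k\pi)}3\right)\widehat\sigma_0(\pi)+\sum_{n=1}^\infty(-1)^n\widehat\sigma_n(\pi)\mathbf j_{2n+1}(\widehat\rho_k\pi)=-\widehat\rho_k\cos(\widehat\rho_k\pi)+\frac{\sin(\widehat\rho_k\pi)}{\pi}.$$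
   Context: $\mathbf j_k$ denotes the spherical Bessel function of the first kind of order $k$. For real $\widehat q\in L_2(0,\pi)$ it is known that $\widehat S'(\rho,x)=\cos(\rho x)+\frac1{2\rho}\left(\int_0^x\widehat q(t)dt\right)\sin(\rho x)+\frac1\rho\sum_{n=0}^\infty(-1)^n\widehat\sigma_n(x)\mathbf j_{2n+1}(\rho x)$ (NSBF representation), with $\rho$-independent coefficients $\widehat\sigma_n(x)$ and $\widehat\sigma_0$ as given, convergent for all $\rho\in\mathbb C$. *)

From HB Require Import structures.
From mathcomp Require Import all_boot all_order all_algebra.
From mathcomp Require Import all_classical all_reals all_analysis.
Set Implicit Arguments. Unset Strict Implicit. Unset Printing Implicit Defensive.
Import Order.TTheory GRing.Theory Num.Theory.
Import numFieldNormedType.Exports.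
Local Open Scope classical_set_scope.
Local Open Scope ring_scope.

Section Defs.
Variable R : realType.

Definition integ (a b : R) (f : R -> R) : R :=
  Rintegral (@lebesgue_measure R) `[a, b] f.

Definition L2_0pi (q : R -> R) : Prop :=
  measurable_fun `[0, pi] q /\
  (\int[@lebesgue_measure R]_(x in `[0%R, pi%R]) ((q x) ^+ 2)%:E < +oo)%E.

(* (y, dy) is a solution on [0,pi] of -y'' + q y = lam y, with dy = y'
   (y' absolutely continuous, equation a.e.), written in the equivalent
   integral (Caratheodory) form. *)
Definition is_sol (q : R -> R) (lam : R) (y dy : R -> R) : Prop :=
  {within `[0, pi], continuous y} /\ {within `[0, pi], continuous dy} /\
  forall x, 0 <= x <= pi ->
    y x = y 0 + integ 0 x dy /\
    dy x = dy 0 + integ 0 x (fun t => (q t - lam) * y t).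

Definition is_eigenvalue (q : R -> R) (lam : R) : Prop :=
  exists y dy : R -> R, is_sol q lam y dy /\ y 0 = 0 /\ dy pi = 0 /\
    exists x, 0 <= x <= pi /\ y x != 0.

(* Spherical Bessel function of the first kind (power series):
   j_k(z) = 2^k z^k sum_m (-1)^m (m+k)! z^(2m) / (m! (2m+2k+1)!). *)
Definition sbessel_term (k : nat) (z : R) (m : nat) : R :=
  (-1) ^+ m * 2 ^+ k * ((m + k)`!)%:R * z ^+ (k + 2 * m)
    / ((m`!)%:R * ((2 * m + 2 * k + 1)`!)%:R).

Definition sbessel (k : nat) (z : R) : R :=
  limn (series (sbessel_term k z)).

End Defs.

From HB Require Import structures.
From mathcomp Require Import all_boot all_order all_algebra.
From mathcomp Require Import all_classical all_reals all_analysis.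
From mathcomp Require Import measurable_realfun lra ring.
Import Order.TTheory GRing.Theory Num.Theory.
Import numFieldNormedType.Exports.
Local Open Scope classical_set_scope.
Local Open Scope ring_scope.

(* The analytic core is uniqueness for the Cauchy problem f' = g, g' = p f,
   f(0) = g(0) = 0 with p integrable, in integral form (section
   HomogeneousCauchy): zeros propagate along steps [a, a + d] on which the
   integral of |p| is at most 1/2, d being uniform by absolute continuity
   of the integral.  Hence every eigenfunction of y(0) = y'(pi) = 0 is a
   multiple of the normalized solution S(rho, .), so S'(rho, pi) = 0 at
   every eigenvalue rho^2 (section Eigenvalues).
   For rho = 0 the primitive S(0, .) then has left derivative 0 at pi, so
   s_0'(pi) = -3 S(0, pi) / pi^2 (section LeftDerivatives) and the formula
   defining sigma_0(pi) collapses to the value of omega.  At an eigenvalue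
   rho_k^2 the NSBF series of S'(rho_k, pi) tends to 0; multiplying it by
   rho_k and inserting the value of omega gives the second identity
   (lemma nsbf_series_at_root). *)

Section RealIntegrals.
Set Implicit Arguments. Unset Strict Implicit.
Variable R : realType.
Notation mu := (@lebesgue_measure R).

Lemma integrable_continuous (f : R -> R) (a b : R) :
  {within `[a, b], continuous f} -> mu.-integrable `[a, b] (EFin \o f).
Proof.
move=> cf; apply: continuous_compact_integrable => //; exact: segment_compact.
Qed.

(* Square integrability on the bounded interval [0, pi] implies integrability,
   by the pointwise bound |q| <= 1 + q^2. *)
Lemma integrable_L2_0pi (q : R -> R) :
  L2_0pi q -> mu.-integrable `[0, pi] (EFin \o q).
Proof.
case=> mq fq.
have iq2 : mu.-integrable `[0, pi] (EFin \o (fun x => q x ^+ 2)).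
  apply/integrableP; split; first by apply/measurable_EFinP; exact: measurable_funX.
  by under eq_integral do rewrite /= ger0_norm ?sqr_ge0//.
have i1q2 : mu.-integrable `[0, pi] (EFin \o (fun x => 1 + q x ^+ 2)).
  have i1 : mu.-integrable `[0, pi] (EFin \o (fun=> (1 : R))).
    exact/integrable_continuous/cst_continuous.
  by apply: eq_integrable (integrableD _ i1 iq2) => //= x _.
apply: le_integrable i1q2 => //; first exact/measurable_EFinP.
move=> x _ /=; rewrite lee_fin.
have h0 : 0 <= 1 + q x ^+ 2 by rewrite addr_ge0 ?sqr_ge0.
rewrite (ger0_norm h0).
by case: (lerP 0 (q x)) => h; [rewrite ger0_norm | rewrite ltr0_norm]; nra.
Qed.

(* An integrable function times a continuous one is integrable on a segment,
   since the continuous factor is bounded there. *)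
Lemma integrableM_continuous (p f : R -> R) (a b : R) :
  mu.-integrable `[a, b] (EFin \o p) -> {within `[a, b], continuous f} ->
  mu.-integrable `[a, b] (EFin \o (fun t => p t * f t)).
Proof.
move=> ip cf.
have mf : measurable_fun `[a, b] f by exact: subspace_continuous_measurable_fun.
have bf : [bounded f x | x in `[a, b]].
  have [M [_ fM]] := compact_bounded (continuous_compact cf (@segment_compact _ a b)).
  by exists M; split; rewrite ?num_real // => ? ? ? ?; exact: fM.
by apply: eq_integrable (integrableMl _ ip mf bf) => //= x _; rewrite EFinM.
Qed.

Lemma integrable_normr (f : R -> R) (D : set R) : measurable D ->
  mu.-integrable D (EFin \o f) -> mu.-integrable D (EFin \o (fun t => `|f t|)).
Proof. by move=> mD fi; apply: eq_integrable (integrable_abse fi). Qed.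

Lemma integ_increment (f : R -> R) (a x : R) : 0 <= a -> a <= x ->
  mu.-integrable `[0, x] (EFin \o f) ->
  integ 0 x f - integ 0 a f = \int[mu]_(t in `]a, x]) f t.
Proof. by move=> a0 ax fi; apply: Rintegral_itvB; rewrite ?bnd_simp. Qed.

Lemma Rintegral_itv_bound (f : R -> R) (a b M : R) : a <= b ->
  mu.-integrable `]a, b] (EFin \o f) ->
  (forall t, a < t <= b -> `|f t| <= M) ->
  `|\int[mu]_(t in `]a, b]) f t| <= M * (b - a).
Proof.
move=> ab fi fM.
apply: (le_trans (le_normr_Rintegral _ _)) => //.
have iM : mu.-integrable `]a, b] (EFin \o (fun=> M)).
  apply: (@integrableS _ _ _ mu `[a, b]) => //.
    by apply: subset_itvr; rewrite bnd_simp.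
  exact/integrable_continuous/cst_continuous.
have := @le_Rintegral _ _ _ mu `]a, b] (fun t => `|f t|) (fun=> M)
  (measurable_itv _) (integrable_normr (measurable_itv _) fi) iM.
move=> /(_ _) le_int; apply: (le_trans (le_int _)).
  by move=> t; rewrite /= in_itv /= => /fM.
rewrite Rintegral_cst //.
have := @lebesgue_measure_itv R `]a, b]; rewrite /= => ->; rewrite lte_fin.
case: ltP => hab /=; first by [].
have -> : b = a by apply: le_anti; rewrite hab ab.
by rewrite subrr.
Qed.

Lemma continuous_within_normr (f : R -> R) (A : set R) :
  {within A, continuous f} -> {within A, continuous (fun t => `|f t|)}.
Proof. by move=> cf x; apply: continuous_comp; [exact: cf | exact: norm_continuous]. Qed.

Lemma continuous_within_subZ (f g : R -> R) (c : R) (A : set R) :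
  {within A, continuous f} -> {within A, continuous g} ->
  {within A, continuous (fun t => f t - c * g t)}.
Proof.
by move=> cf cg x; apply: cvgB; [exact: cf | apply: cvgM; [exact: cvg_cst | exact: cg]].
Qed.

Lemma integrableB_cst (q : R -> R) (lam a b : R) :
  mu.-integrable `[a, b] (EFin \o q) ->
  mu.-integrable `[a, b] (EFin \o (fun t => q t - lam)).
Proof.
move=> iq; have ilam : mu.-integrable `[a, b] (EFin \o (fun=> lam)).
  exact/integrable_continuous/cst_continuous.
by apply: eq_integrable (integrableB _ iq ilam) => //= t _; rewrite EFinB.
Qed.

End RealIntegrals.

Section HomogeneousCauchy.
Set Implicit Arguments. Unset Strict Implicit.
Variable R : realType.
Notation mu := (@lebesgue_measure R).
Variables (p f g : R -> R) (b : R).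
Hypothesis ip : mu.-integrable `[0, b] (EFin \o p).
Hypothesis cf : {within `[0, b], continuous f}.
Hypothesis cg : {within `[0, b], continuous g}.
Hypothesis fg_integral : forall x, 0 <= x <= b ->
  f x = integ 0 x g /\ g x = integ 0 x (fun t => p t * f t).

Lemma cauchy_local_bound (a m Mf Mg : R) :
  0 <= a -> a <= m -> m <= b -> m - a <= 1/2 ->
  (forall y, a <= y <= m -> \int[mu]_(t in `]a, y]) `|p t| <= 1/2) ->
  f a = 0 -> g a = 0 ->
  (forall t, t \in `[a, m] -> `|f t| <= Mf) ->
  (forall t, t \in `[a, m] -> `|g t| <= Mg) ->
  forall y, a <= y <= m -> `|f y| <= Mg / 2 /\ `|g y| <= Mf / 2.
Proof.
move=> a0 am mb short small_p fa ga f_le g_le y /andP[ay ym].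
have am_a : a \in `[a, m] by rewrite in_itv /= lexx am.
have Mf0 : 0 <= Mf := le_trans (normr_ge0 _) (f_le a am_a).
have Mg0 : 0 <= Mg := le_trans (normr_ge0 _) (g_le a am_a).
have yb : y <= b := le_trans ym mb.
have s0y : `[0, y] `<=` `[0, b] by apply: subset_itv; rewrite bnd_simp.
have say : `]a, y] `<=` `[0, b] by apply: subset_itv; rewrite bnd_simp.
have in_am t : a < t <= y -> t \in `[a, m].
  by case/andP=> ha ty; rewrite in_itv /= (ltW ha) (le_trans ty ym).
have [Ef Eg] := fg_integral (x := y) ltac:(by rewrite (le_trans a0 ay) yb).
have [Efa Ega] := fg_integral (x := a) ltac:(by rewrite a0 (le_trans am mb)).
have ig := integrable_continuous cg.
have ipf := integrableM_continuous ip cf.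
split.
- have -> : f y = \int[mu]_(t in `]a, y]) g t.
    by rewrite -integ_increment //; [rewrite -Ef -Efa fa subr0 | exact: integrableS ig].
  apply: (le_trans (Rintegral_itv_bound (M := Mg) ay _ _)).
  + exact: integrableS ig.
  + by move=> t /in_am /g_le.
  + nra.
- have -> : g y = \int[mu]_(t in `]a, y]) (p t * f t).
    by rewrite -integ_increment //; [rewrite -Eg -Ega ga subr0 | exact: integrableS ipf].
  have ipf_ay : mu.-integrable `]a, y] (EFin \o (fun t => p t * f t)).
    exact: integrableS ipf.
  have ip_ay : mu.-integrable `]a, y] (EFin \o (fun t => `|p t|)).
    by apply: integrable_normr => //; exact: integrableS ip.
  have iMp : mu.-integrable `]a, y] (EFin \o (fun t => Mf * `|p t|)).
    by apply: eq_integrable (integrableZl _ Mf ip_ay) => //= t _; rewrite EFinM.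
  apply: (le_trans (le_normr_Rintegral _ ipf_ay)) => //.
  apply: (le_trans (le_Rintegral _ (integrable_normr _ ipf_ay) iMp _)) => //.
    move=> t /= t_ay; rewrite normrM mulrC ler_wpM2r //.
    by apply: f_le; apply: in_am; move: t_ay; rewrite /= in_itv.
  rewrite RintegralZl // ler_wpM2l //.
  by rewrite -div1r; apply: small_p; rewrite ay.
Qed.

Lemma cauchy_zero_step (d : R) : 0 < d -> d <= 1/2 ->
  (forall u v, 0 <= u -> u <= v -> v <= b -> v - u <= d ->
     \int[mu]_(t in `]u, v]) `|p t| <= 1/2) ->
  forall a, 0 <= a ->
  (forall x, 0 <= x <= b -> x <= a -> f x = 0 /\ g x = 0) ->
  (forall x, 0 <= x <= b -> x <= a + d -> f x = 0 /\ g x = 0).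
Proof.
move=> d0 d12 small_p a a0 zero_a x /andP[x0 xb] xad.
have [ba|ab] := leP b a; first by apply: zero_a; rewrite ?x0 ?(le_trans xb).
have [xa|ax] := leP x a; first by apply: zero_a; rewrite ?x0.
set m := Num.min (a + d) b.
have am : a <= m by rewrite /m le_min (ltW ab) lerDl ltW.
have mb : m <= b by rewrite /m ge_min lexx orbT.
have mad : m - a <= d by rewrite /m lerBlDl ge_min lexx.
have sam : `[a, m] `<=` `[0, b] by apply: subset_itv; rewrite bnd_simp.
have [cf_max cf_in f_le] :=
  EVT_max am (continuous_subspaceW sam (continuous_within_normr cf)).
have [cg_max cg_in g_le] :=
  EVT_max am (continuous_subspaceW sam (continuous_within_normr cg)).
have [fa ga] : f a = 0 /\ g a = 0 by apply: zero_a; rewrite ?a0 ?(ltW ab).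
have small_am y : a <= y <= m -> \int[mu]_(t in `]a, y]) `|p t| <= 1/2.
  by case/andP=> ay ym; apply: small_p => //; [exact: le_trans ym mb | lra].
have bound := cauchy_local_bound a0 am mb ltac:(lra) small_am fa ga f_le g_le.
have [f_max _] := bound cf_max ltac:(by move: cf_in; rewrite in_itv).
have [_ g_max] := bound cg_max ltac:(by move: cg_in; rewrite in_itv).
have [fx gx] := bound x ltac:(by rewrite (ltW ax) /m le_min xad xb).
have := normr_ge0 (f cf_max); have := normr_ge0 (g cg_max).
have := normr_ge0 (f x); have := normr_ge0 (g x).
by split; apply/normr0_eq0/le_anti/andP; split; lra.
Qed.

(* The uniqueness theorem: the absolute continuity of the integral of |p|
   provides a uniform step d, and finitely many steps cover [0, b]. *)
Lemma cauchy_zero x : 0 <= x <= b -> f x = 0 /\ g x = 0.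
Proof.
have ipT : mu.-integrable setT (EFin \o (p \_ `[0, b])).
  by rewrite -restrict_EFin; apply: (proj1 (integrable_mkcond _ _) ip).
have [e [e0 abs_cont]] := integral_normr_continuous ipT (e := 1/2) ltac:(lra).
set d := Num.min (e / 2) (1 / 2).
have d0 : 0 < d by rewrite /d lt_min; apply/andP; split; lra.
have d12 : d <= 1 / 2 by rewrite /d ge_min lexx orbT.
have de : d < e by apply: (le_lt_trans (y := e / 2)); [rewrite /d ge_min lexx | lra].
have small_p u v : 0 <= u -> u <= v -> v <= b -> v - u <= d ->
    \int[mu]_(t in `]u, v]) `|p t| <= 1/2.
  move=> u0 uv vb vud.
  rewrite (@eq_Rintegral _ _ _ mu _ (fun t => `|(p \_ `[0, b]) t|)).
    apply/ltW/abs_cont => //.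
    have := @lebesgue_measure_itv R `]u, v]; rewrite /= => ->.
    case: ifP => _; last by rewrite lte_fin.
    by rewrite -EFinD lte_fin; lra.
  move=> t; rewrite inE /= in_itv /= => /andP[ut tv].
  by rewrite patchE ifT // inE /= in_itv /= (le_trans u0 (ltW ut)) (le_trans tv vb).
have zero_0 y : 0 <= y <= b -> y <= 0 -> f y = 0 /\ g y = 0.
  move=> /andP[y0 yb] y_le0.
  have -> : y = 0 by apply: le_anti; rewrite y_le0 y0.
  have [-> ->] := fg_integral (x := 0) ltac:(by rewrite lexx (le_trans y0 yb)).
  by rewrite /integ set_itv1 !Rintegral_set1.
have zero_n (n : nat) y : 0 <= y <= b -> y <= n%:R * d -> f y = 0 /\ g y = 0.
  elim: n y => [|n IH] y; first by rewrite mul0r; exact: zero_0.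
  rewrite -addn1 natrD mulrDl mul1r.
  by apply: (cauchy_zero_step d0 d12 small_p _ IH); rewrite mulr_ge0 // ltW.
move=> /[dup] xb /andP[_ x_le_b]; apply: (zero_n (Num.truncn (b / d)).+1) => //.
apply: (le_trans x_le_b); rewrite -ler_pdivrMr //; exact/ltW/truncnS_gt.
Qed.

End HomogeneousCauchy.

Section Eigenvalues.
Set Implicit Arguments. Unset Strict Implicit.
Variable R : realType.
Notation mu := (@lebesgue_measure R).

Lemma is_sol_zero_combination (q : R -> R) (lam : R) (y dy S dS : R -> R) :
  mu.-integrable `[0, pi] (EFin \o q) ->
  is_sol q lam y dy -> is_sol q lam S dS -> y 0 = 0 -> S 0 = 0 -> dS 0 = 1 ->
  forall x, 0 <= x <= pi ->
    y x - dy 0 * S x = integ 0 x (fun t => dy t - dy 0 * dS t) /\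
    dy x - dy 0 * dS x =
      integ 0 x (fun t => (q t - lam) * (y t - dy 0 * S t)).
Proof.
move=> iq [cy [cdy Hy]] [cS [cdS HS]] y0 S0 dS0 x hx.
have ip := integrableB_cst lam iq.
have s0x : `[0, x] `<=` `[0, pi] by case/andP: hx => *; apply: subset_itv; rewrite bnd_simp.
have sub_0x h : mu.-integrable `[0, pi] (EFin \o h) ->
    mu.-integrable `[0, x] (EFin \o h) by move=> ih; exact: integrableS ih.
have scaled c h : mu.-integrable `[0, x] (EFin \o h) ->
    mu.-integrable `[0, x] (EFin \o (fun t => c * h t)).
  by move=> ih; apply: eq_integrable (integrableZl _ c ih) => //= t _; rewrite EFinM.
have idy := sub_0x _ (integrable_continuous cdy).
have idS := sub_0x _ (integrable_continuous cdS).
have ipy := sub_0x _ (integrableM_continuous ip cy).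
have ipS := sub_0x _ (integrableM_continuous ip cS).
have [Ey Edy] := Hy x hx; have [ES EdS] := HS x hx.
split.
- rewrite Ey ES y0 S0 !add0r /integ RintegralB //; last exact: scaled.
  by rewrite RintegralZl.
- rewrite Edy EdS dS0 /integ.
  rewrite [RHS](@eq_Rintegral _ _ _ mu _
    (fun t => (q t - lam) * y t - dy 0 * ((q t - lam) * S t))); last first.
    by move=> t _; ring.
  rewrite RintegralB //; last exact: scaled.
  by rewrite RintegralZl //; ring.
Qed.

(* If lam is an eigenvalue, the eigenfunction is a nonzero multiple of the
   normalized solution S, so S satisfies the boundary condition S'(pi) = 0. *)
Lemma eigenvalue_dS_pi (q : R -> R) (lam : R) (S dS : R -> R) :
  mu.-integrable `[0, pi] (EFin \o q) -> is_eigenvalue q lam ->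
  is_sol q lam S dS -> S 0 = 0 -> dS 0 = 1 -> dS pi = 0.
Proof.
move=> iq [y [dy [sy [y0 [dypi [x0 [hx0 yx0]]]]]]] sS S0 dS0.
have comb := is_sol_zero_combination iq sy sS y0 S0 dS0.
have [cy [cdy _]] := sy; have [cS [cdS _]] := sS.
have zero := cauchy_zero (integrableB_cst lam iq)
  (continuous_within_subZ (c := dy 0) cy cS)
  (continuous_within_subZ (c := dy 0) cdy cdS) comb.
have [dy0_eq0|dy0_neq0] := eqVneq (dy 0) 0.
  have [z_x0 _] := zero x0 hx0.
  by move: yx0 z_x0; rewrite dy0_eq0 mul0r subr0 => /eqP.
have [_ dz_pi] := zero pi ltac:(by rewrite pi_ge0 lexx).
move: dz_pi; rewrite dypi sub0r => /eqP.
by rewrite oppr_eq0 mulf_eq0 (negbTE dy0_neq0) => /eqP.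
Qed.
End Eigenvalues.

Section LeftDerivatives.
Set Implicit Arguments. Unset Strict Implicit.
Variable R : realType.
Notation mu := (@lebesgue_measure R).

(* A primitive S of a continuous dS on [0, b] has left derivative 0 at b
   when dS b = 0: for small h < 0, |S(b + h) - S(b)| <= e |h|. *)
Lemma primitive_left_quotient0 (S dS : R -> R) (b : R) : 0 < b ->
  {within `[0, b], continuous dS} ->
  (forall x, 0 <= x <= b -> S x = S 0 + integ 0 x dS) -> dS b = 0 ->
  (fun h => (S (b + h) - S b) / h) @ 0^'- --> (0 : R).
Proof.
move=> b0 cdS HS dSb0.
have [_ _ dS_left] := (continuous_within_itvP dS b0).1 cdS.
rewrite dSb0 in dS_left.
apply/cvgrPdist_le => e e0.
have [eta /= eta0 near_b] := (cvgrPdist_le _ _).1 dS_left e e0.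
exists (Num.min eta b); first by rewrite /= lt_min eta0 b0.
move=> h /=; rewrite add0r normrN => hb hneg; rewrite ltr0_norm // in hb.
move: hb; rewrite lt_min => /andP[heta hb].
have idS : mu.-integrable `]b + h, b] (EFin \o dS).
  apply: integrableS (integrable_continuous cdS) => //.
  by apply: subset_itv; rewrite bnd_simp //; lra.
have -> : S (b + h) - S b = - \int[mu]_(t in `]b + h, b]) dS t.
  rewrite -integ_increment; [|lra|lra|exact: integrable_continuous].
  rewrite (HS (b + h)); last by apply/andP; split; lra.
  by rewrite (HS b) ?lexx ?(ltW b0) //; ring.
rewrite add0r normrN normrM normrN normfV (ltr0_norm hneg) ler_pdivrMr; last lra.
apply: le_trans (Rintegral_itv_bound (M := e) _ idS _) _; first lra.
- move=> t /andP[t_gt t_le]; have [tb|tb] := ltP t b; last first.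
    have -> : t = b by apply: le_anti; rewrite t_le tb.
    by rewrite dSb0 normr0 ltW.
  have := near_b t; rewrite /= add0r normrN => /(_ _ tb).
  by apply; rewrite ger0_norm; lra.
- by rewrite le_eqVlt; apply/orP; left; apply/eqP; ring.
Qed.
Lemma s0_left_derivative (S : R -> R) (x : R) : 0 < x ->
  (fun h => (S (x + h) - S x) / h) @ 0^'- --> (0 : R) ->
  (fun h => (3 * (S (x + h) / (x + h) - 1) - 3 * (S x / x - 1)) / h) @ 0^'-
    --> - 3 * S x / x ^+ 2.
Proof.
move=> x0 dS_left.
set Q := fun h => (S (x + h) - S x) / h in dS_left.
have xh_inv : (fun h => (x + h)^-1) @ 0^'- --> x^-1.
  apply: cvgV; first by rewrite gt_eqF.
  rewrite -[X in _ --> X]addr0; apply: cvgD; first exact: cvg_cst.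
  by apply: cvg_at_left_filter; exact: cvg_id.
have lim : (fun h => 3 * (Q h * (x + h)^-1 - S x * (x^-1 * (x + h)^-1))) @ 0^'-
    --> 3 * (0 * x^-1 - S x * (x^-1 * x^-1)).
  apply: cvgM; first exact: cvg_cst.
  apply: cvgB; first exact: cvgM.
  by apply: cvgM; [exact: cvg_cst | apply: cvgM => //; exact: cvg_cst].
have -> : - 3 * S x / x ^+ 2 = 3 * (0 * x^-1 - S x * (x^-1 * x^-1)).
  by field; rewrite gt_eqF.
apply: cvg_trans lim; apply: near_eq_cvg.
exists x => //= h; rewrite /ball_ /= sub0r normrN => hx hneg.
rewrite ltr0_norm // in hx.
by rewrite /Q; field; rewrite ltr0_neq0 //= !gt_eqF //; lra.
Qed.

End LeftDerivatives.

(* If the NSBF series cos + (2 rho)^-1 I sin + rho^-1 sum_n a_n tends to 0,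
   with a_0 = sigma_0 j and I / 2 = - sigma_0 / 3 - 1 / P (the value of
   omega), then multiplying by rho and isolating the n = 0 term gives the
   limit of the tail series. *)
Lemma nsbf_series_at_root (R : realType) (rho P I sg j s c : R) (a : nat -> R) :
  rho != 0 -> P != 0 -> 1 / 2 * I = - sg / 3 - 1 / P -> a 0%N = sg * j ->
  (fun N => c + (2 * rho)^-1 * I * s + rho^-1 * \sum_(0 <= n < N) a n) @ \oo
    --> (0 : R) ->
  (fun N => (j - s / 3) * sg + \sum_(1 <= n < N) a n) @ \oo
    --> - rho * c + s / P.
Proof.
move=> rho0 P0 omega a0 series0.
have lim : (fun N => rho * (c + (2 * rho)^-1 * I * s
                     + rho^-1 * \sum_(0 <= n < N) a n) - rho * c + s / P) @ \oo
    --> rho * 0 - rho * c + s / P.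
  by apply: cvgD; [apply: cvgB; [apply: cvgM => //; exact: cvg_cst|] |]; exact: cvg_cst.
rewrite (_ : - rho * c + s / P = rho * 0 - rho * c + s / P); last by ring.
apply: cvg_trans lim; apply: near_eq_cvg; near=> N.
have N_gt0 : (0 < N)%N by near: N; exists 1%N.
rewrite big_ltn // a0.
have -> : I = 2 * (- sg / 3 - 1 / P) by rewrite -omega; field.
by field; rewrite rho0 P0.
Unshelve. all: by end_near.
Qed.

Theorem mainTheorem3 (R : realType) (q : R -> R)
    (Sh dS : R -> R -> R) (ds0 : R -> R) (sigma : nat -> R -> R) :
  L2_0pi q ->
  is_eigenvalue q 0 ->
  (* S(rho,.) solves -y'' + q y = rho^2 y, S(rho,0)=0, S'(rho,0)=1; dS = S' *)
  (forall rho, is_sol q (rho ^+ 2) (Sh rho) (dS rho) /\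
               Sh rho 0 = 0 /\ dS rho 0 = 1) ->
  (* ds0 x is the (left) derivative at x of s0(x) = 3 (S(0,x)/x - 1) *)
  (let s0 := fun x => 3 * (Sh 0 x / x - 1) in
   forall x, 0 < x <= pi ->
     (fun h => (s0 (x + h) - s0 x) / h) @ 0^'- --> ds0 x) ->
  (* sigma 0 is the given first NSBF coefficient *)
  (forall x, 0 < x <= pi ->
     sigma 0%N x = 3 * (Sh 0 x / x - 1) / x + ds0 x - 3 / 2 * integ 0 x q) ->
  (* NSBF representation of S'(rho,x) with coefficients sigma n *)
  (forall rho x, rho != 0 -> 0 < x <= pi ->
     (fun N => cos (rho * x) + (2 * rho)^-1 * integ 0 x q * sin (rho * x)
        + rho^-1 * \sum_(0 <= n < N) (-1) ^+ n * sigma n x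
                        * sbessel n.*2.+1 (rho * x)) @ \oo --> dS rho x) ->
  (1 / 2 * integ 0 pi q = - sigma 0%N pi / 3 - 1 / pi) /\
  (forall rhok, 0 < rhok -> is_eigenvalue q (rhok ^+ 2) ->
     (fun N => (sbessel 1 (rhok * pi) - sin (rhok * pi) / 3) * sigma 0%N pi
        + \sum_(1 <= n < N) (-1) ^+ n * sigma n pi
                             * sbessel n.*2.+1 (rhok * pi)) @ \oo
     --> - rhok * cos (rhok * pi) + sin (rhok * pi) / pi).
Proof.
move=> L2q eig0 Hsol Hds0 Hsig Hnsbf.
have iq := integrable_L2_0pi L2q.
have pi_gt0 : (0 : R) < pi := pi_gt0 R.
have pi_neq0 : (pi : R) != 0 := lt0r_neq0 pi_gt0.
have pi_in : 0 < (pi : R) <= pi by rewrite pi_gt0 lexx.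
have dS_pi rho : is_eigenvalue q (rho ^+ 2) -> dS rho pi = 0.
  move=> eig; have [sol [S0 dS0]] := Hsol rho.
  exact: eigenvalue_dS_pi iq eig sol S0 dS0.
have [[_ [cdS0 HS0]] _] := Hsol 0.
have S0_left := primitive_left_quotient0 pi_gt0 cdS0 (fun x hx => (HS0 x hx).1)
  (dS_pi 0 ltac:(by rewrite expr2 mulr0)).
have ds0_pi : ds0 pi = - 3 * Sh 0 pi / pi ^+ 2.
  have s0_left := Hds0 pi pi_in; rewrite /= in s0_left.
  have lim := s0_left_derivative pi_gt0 S0_left.
  apply: (cvg_unique (@Rhausdorff R) s0_left).
  exact: lim.
have omega : 1 / 2 * integ 0 pi q = - sigma 0%N pi / 3 - 1 / pi.
  rewrite (Hsig pi pi_in) ds0_pi.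
  by move: pi_neq0; move: (pi : R) => P P_neq0; field.
split=> // rk rk_gt0 eig_k.
apply: nsbf_series_at_root (lt0r_neq0 rk_gt0) pi_neq0 omega _ _.
- by rewrite /= expr0 mul1r.
- by have := Hnsbf rk pi (lt0r_neq0 rk_gt0) pi_in; rewrite dS_pi.
Qed.
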